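(* Let $\Gamma$ be a finite simple graph on $n$ vertices, let $\alpha\models n$, and let $\mu\vdash n$ be the partition obtained by sorting the parts of $\alpha$. Then $\zeta_\alpha(\Gamma)\le c_\mu(\Gamma)$, where $c_\mu(\Gamma)$ is the coefficient of the monomial symmetric function $m_\mu$ in Stanley's chromatic symmetric function $X_\Gamma=\sum_{\mu\vdash n}c_\mu(\Gamma)m_\mu$.
   Context: Stanley's chromatic symmetric function is $X_\Gamma=\sum_\kappa\prod_{v\in V}x_{\kappa(v)}$, summed over all proper colorings $\kappa:V\to\mathbb{N}=\{1,2,\dots\}$ (no edge has both endpoints of the same color); $m_\mu$ is the monomial symmetric function. For a coloring $\lambda:V\to\mathbb{N}$ of $\Gamma$ with values $i_1<\dots<i_k$, let $I_j=\lambda^{-1}(\{i_1,\dots,i_j\})$, $I_0=\emptyset$. It is ordered if for each $j$, no two distinct vertices $u,w$ with $\lambda(u)=\lambda(w)=i_j$ are joined by a path in $\Gamma$ (possibly a single edge) all of whose internal vertices lie in $I_{j-1}$. Its type is $(|\lambda^{-1}(i_1)|,\dots,|\lambda^{-1}(i_k)|)$. For a composition $\alpha$ of $n$ with $k(\alpha)$ parts, $\zeta_\alpha(\Gamma)$ is the number of surjective ordered colorings $\lambda:V\to\{1,\dots,k(\alpha)\}$ of type $\alpha$. *)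

From Stdlib Require Import ClassicalEpsilon.
From mathcomp Require Import all_boot.
Set Implicit Arguments. Unset Strict Implicit. Unset Printing Implicit Defensive.

Definition simple_graph (T : finType) (e : rel T) : Prop :=
  symmetric e /\ irreflexive e.

Definition asbool (P : Prop) : bool :=
  if excluded_middle_informative P then true else false.

Lemma asboolP (P : Prop) : reflect P (asbool P).
Proof. by rewrite /asbool; case: excluded_middle_informative => h; constructor. Qed.

Definition composition (n : nat) (alpha : seq nat) : bool :=
  all (fun a => 0 < a) alpha && (sumn alpha == n).

(* Colors 1,...,k of the paper are represented by 'I_k (color i <-> i+1). *)

Definition proper (T : finType) (e : rel T) (C : Type) (kappa : T -> C) : Prop :=
  forall u v, e u v -> kappa u <> kappa v.

(* Coefficient of the monomial x_1^{d_1} ... x_k^{d_k} (k = size d) in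
   Stanley's chromatic symmetric function X_Gamma: the number of proper
   colorings kappa : V -> N with |kappa^{-1}(i)| = d_i for i <= k and
   |kappa^{-1}(i)| = 0 for i > k; such colorings take values in {1..k}. *)
Definition monomial_coeff (T : finType) (e : rel T) (d : seq nat) : nat :=
  #|[set kappa : {ffun T -> 'I_(size d)} |
      asbool (proper e kappa) &&
      [forall i : 'I_(size d), #|[set v | kappa v == i]| == nth 0 d i]]|.

(* c_mu(Gamma): coefficient of m_mu in X_Gamma = coefficient of the monomial
   x_1^{mu_1} ... x_k^{mu_k}, mu a partition (weakly decreasing). *)
Definition chrom_coeff (T : finType) (e : rel T) (mu : seq nat) : nat :=
  monomial_coeff e mu.

Definition path_through (T : finType) (e : rel T) (S : pred T) (u w : T) : Prop :=
  exists q : seq T, [/\ path e u (rcons q w), uniq (u :: rcons q w) & all S q].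

(* Ordered coloring lambda : V -> {1..k}, surjective case: the values are
   i_j = j, and I_{j-1} = lambda^{-1}{1..j-1}, i.e. the vertices of color
   strictly smaller than j. *)
Definition ordered_coloring (T : finType) (e : rel T) (k : nat)
    (lam : T -> 'I_k) : Prop :=
  forall (c : 'I_k) (u w : T), lam u = c -> lam w = c -> u <> w ->
    ~ path_through e (fun x => lam x < c) u w.

Definition zeta (T : finType) (e : rel T) (alpha : seq nat) : nat :=
  #|[set lam : {ffun T -> 'I_(size alpha)} |
      [forall i : 'I_(size alpha), exists v, lam v == i] &&
      asbool (ordered_coloring e lam) &&
      [forall i : 'I_(size alpha), #|[set v | lam v == i]| == nth 0 alpha i]]|.

From Pilot Require Import Defs.
From mathcomp Require Import all_boot.

(* An ordered coloring is proper, since an edge is a path without internal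
   vertices; hence surjective ordered colorings of type alpha are among the
   proper colorings counted by the coefficient of x^alpha in X_Gamma. That
   coefficient equals c_mu because X_Gamma is symmetric: permuting the
   exponent sequence only relabels the colors. *)

Lemma perm_eq_nth_inj {X : eqType} (x0 : X) {s t : seq X} : perm_eq s t ->
  exists2 f : 'I_(size s) -> 'I_(size t), injective f &
    forall i, nth x0 t (f i) = nth x0 s i.
Proof.
move=> pst; have [Is pIs ->] := perm_iotaP x0 pst.
have szIs : size Is = size t by rewrite (perm_size pIs) size_iota.
rewrite size_map; have Is_lt (i : 'I_(size Is)) : nth 0 Is i < size t.
  by have := mem_nth 0 (ltn_ord i); rewrite (perm_mem pIs) mem_iota.
exists (fun i => Ordinal (Is_lt i)) => [i j /(congr1 val) /= /eqP|i /=].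
  by rewrite nth_uniq ?(perm_uniq pIs) ?iota_uniq ?szIs // => /eqP /val_inj.
by rewrite (nth_map 0).
Qed.

Lemma ordered_coloring_proper {T : finType} (e : rel T) {k : nat}
    (lam : T -> 'I_k) :
  irreflexive e -> ordered_coloring e lam -> Defs.proper e lam.
Proof.
move=> eirr ord u v euv lam_uv.
have uv : u != v by apply: contraTneq euv => ->; rewrite eirr.
apply: (ord (lam u) u v erefl (esym lam_uv) (elimN eqP uv)).
by exists [::]; split; rewrite //= ?euv // inE uv.
Qed.

Lemma zeta_le_monomial_coeff {T : finType} (e : rel T) (alpha : seq nat) :
  irreflexive e -> zeta e alpha <= monomial_coeff e alpha.
Proof.
move=> eirr; apply/subset_leq_card/subsetP => lam.
rewrite !inE => /andP [/andP [_ /asboolP ord] types].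
by rewrite types andbT; apply/asboolP/ordered_coloring_proper.
Qed.

Lemma monomial_coeff_perm_le {T : finType} (e : rel T) {d d' : seq nat} :
  perm_eq d d' -> monomial_coeff e d <= monomial_coeff e d'.
Proof.
move=> pdd'; have [f finj fnth] := perm_eq_nth_inj 0 pdd'.
have f_onto j : j \in codom f.
  by apply: inj_card_onto; rewrite // !card_ord (perm_size pdd').
pose relabel (kappa : {ffun T -> 'I_(size d)}) := [ffun v => f (kappa v)].
have relabel_inj : injective relabel.
  move=> k1 k2 /ffunP k12; apply/ffunP => v; apply: finj.
  by have := k12 v; rewrite !ffunE.
rewrite /monomial_coeff -(card_imset _ relabel_inj).
apply/subset_leq_card/subsetP => _ /imsetP [kappa + ->].
rewrite !inE => /andP [/asboolP kappa_proper /forallP types].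
apply/andP; split.
  by apply/asboolP => u v /kappa_proper kuv; rewrite !ffunE => /finj.
apply/forallP => j; have /codomP [i ->] := f_onto j.
have -> : [set v | relabel kappa v == f i] = [set v | kappa v == i].
  by apply/setP => v; rewrite !inE ffunE (inj_eq finj).
by rewrite fnth; exact: types i.
Qed.

Lemma monomial_coeff_perm {T : finType} (e : rel T) {d d' : seq nat} :
  perm_eq d d' -> monomial_coeff e d = monomial_coeff e d'.
Proof.
move=> pdd'; apply/eqP; rewrite eqn_leq !monomial_coeff_perm_le //.
by rewrite perm_sym.
Qed.

Theorem mainTheorem14 (T : finType) (e : rel T) (alpha : seq nat) :
  simple_graph e ->
  composition #|T| alpha ->
  zeta e alpha <= chrom_coeff e (sort geq alpha).
Proof.
move=> [_ eirr] _.
rewrite /chrom_coeff (monomial_coeff_perm e (permEl (perm_sort geq alpha))).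
exact: zeta_le_monomial_coeff.
Qed.
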